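(* Let $\mathfrak E$ be an expectation of contributions with weights satisfying $c(k)=c(n-1-k)$ for all $k\in\{0,\dots,n-1\}$. Then for all $g\in\mathbb B(X)$ and $x\in X$, $$\mathfrak E_x(\omega_g)=\mathfrak E_x(\nu_{\overline g}).$$
   Context: $X$ is a fixed finite set of $n=|X|$ variables; $\mathbb B(X)$ is the set of Boolean functions $\{0,1\}^X\to\{0,1\}$, $\overline g$ denotes negation. For assignments $\mathbf u$ over $S$ and $\mathbf w$ over $X\setminus S$, $\mathbf u;\mathbf w$ is their concatenation. A cooperative game is $v:2^X\to\mathbb R$; $\partial_xv(S)=v(S\cup\{x\})-v(S\setminus\{x\})$. An expectation of contributions is a map $(x,v)\mapsto\mathfrak E_x(v)$ for which there are nonnegative weights $c(0),\dots,c(n-1)$ with $\sum_{S\subseteq X\setminus\{x\}}c(|S|)=1$ and $\mathfrak E_x(v)=\sum_{S\subseteq X\setminus\{x\}}c(|S|)\,\partial_xv(S)$. Dominating CGM: $\omega_f(S)=1$ if $\exists\mathbf u\in\{0,1\}^S\ \forall\mathbf w\in\{0,1\}^{X\setminus S}: f(\mathbf u;\mathbf w)=1$, else $0$. Rectifying CGM: $\nu_f(S)=1$ if $\forall\mathbf w\in\{0,1\}^{X\setminus S}\ \exists\mathbf u\in\{0,1\}^S: f(\mathbf u;\mathbf w)=1$, else $0$. *)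

From mathcomp Require Import all_boot all_order all_algebra.
Set Implicit Arguments. Unset Strict Implicit. Unset Printing Implicit Defensive.
Import Order.TTheory GRing.Theory Num.Theory.
Local Open Scope ring_scope.

(* Variables: a finite type X; n = #|X|.
   A total assignment is a : {ffun X -> bool}; a Boolean function is
   g : {ffun X -> bool} -> bool. *)

(* Concatenation u;w of an assignment u on S and w on X\S
   (only the values of u on S and of w off S matter). *)
Definition concat (X : finType) (S : {set X}) (u w : {ffun X -> bool})
  : {ffun X -> bool} := [ffun x => if x \in S then u x else w x].

Definition bneg (X : finType) (g : {ffun X -> bool} -> bool) :
  {ffun X -> bool} -> bool := fun a => ~~ g a.

Definition omega (R : numDomainType) (X : finType)
  (f : {ffun X -> bool} -> bool) (S : {set X}) : R :=
  if [exists u : {ffun X -> bool}, forall w : {ffun X -> bool}, f (concat S u w)]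
  then 1 else 0.

Definition nu (R : numDomainType) (X : finType)
  (f : {ffun X -> bool} -> bool) (S : {set X}) : R :=
  if [forall w : {ffun X -> bool}, exists u : {ffun X -> bool}, f (concat S u w)]
  then 1 else 0.

Definition contrib (R : numDomainType) (X : finType) (x : X)
  (v : {set X} -> R) (S : {set X}) : R := v (x |: S) - v (S :\ x).

Definition expectation_weights (R : numDomainType) (X : finType) (c : nat -> R) :=
  (forall k, (k < #|X|)%N -> 0 <= c k) /\
  (forall x : X, \sum_(S : {set X} | x \notin S) c #|S| = 1).

Definition expect (R : numDomainType) (X : finType) (c : nat -> R) (x : X)
  (v : {set X} -> R) : R :=
  \sum_(S : {set X} | x \notin S) c #|S| * contrib x v S.

From mathcomp Require Import all_boot all_order all_algebra.
Import Order.TTheory GRing.Theory Num.Theory.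
Set Implicit Arguments. Unset Strict Implicit. Unset Printing Implicit Defensive.
Local Open Scope ring_scope.

(* The dominating game of g and the rectifying game of its negation are dual:
   swapping the quantifiers "exists u forall w" and negating gives
   nu_{~g}(X \ S) = 1 - omega_g(S).  Fix x and write S' := X \ (S u {x}) for
   S avoiding x; the map S |-> S' is an involution on the subsets avoiding x,
   with |S'| = n - 1 - |S|.  Duality turns the contribution of x to nu_{~g}
   at S' into the contribution of x to omega_g at S, so reindexing the sum
   defining E_x(nu_{~g}) along S |-> S' and using the symmetry of the weights
   c(k) = c(n-1-k) yields E_x(omega_g). *)

Lemma concat_setC (X : finType) (S : {set X}) (u w : {ffun X -> bool}) :
  concat (~: S) u w = concat S w u.
Proof. by apply/ffunP => y; rewrite !ffunE inE; case: (y \in S). Qed.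

Lemma nu_bneg_setC (R : numDomainType) (X : finType)
    (g : {ffun X -> bool} -> bool) (S : {set X}) :
  nu R (bneg g) (~: S) = 1 - omega R g S.
Proof.
rewrite /nu /omega.
have -> : [forall w, exists u, bneg g (concat (~: S) u w)] =
          ~~ [exists u, forall w, g (concat S u w)].
  rewrite negb_exists; apply/eq_forallb => w; rewrite negb_forall.
  by apply/eq_existsb => u; rewrite concat_setC.
by case: [exists u, _]; rewrite ?subrr ?subr0.
Qed.

Lemma setD1_notin (X : finType) (x : X) (S : {set X}) :
  x \notin S -> S :\ x = S.
Proof.
by move=> xS; apply/setP => y; rewrite !inE; case: eqVneq => // ->; rewrite (negbTE xS).
Qed.

Definition coavoid (X : finType) (x : X) (S : {set X}) : {set X} :=
  ~: (x |: S).

Lemma coavoid_notin (X : finType) (x : X) (S : {set X}) :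
  x \notin coavoid x S.
Proof. by rewrite !inE eqxx. Qed.

Lemma coavoidK (X : finType) (x : X) (S : {set X}) :
  coavoid x (coavoid x S) = S :\ x.
Proof.
by apply/setP => y; rewrite /coavoid !inE; case: (y == x); rewrite ?negbK.
Qed.

Lemma sum_coavoid (R : nmodType) (X : finType) (x : X) (F : {set X} -> R) :
  \sum_(S : {set X} | x \notin S) F S =
  \sum_(S : {set X} | x \notin S) F (coavoid x S).
Proof.
have inv (S : {set X}) : x \notin S -> coavoid x (coavoid x S) = S.
  by move=> xS; rewrite coavoidK setD1_notin.
rewrite (reindex_onto (coavoid x) (coavoid x) inv) /=.
apply: eq_bigl => S; rewrite coavoid_notin coavoidK /=.
apply/eqP/idP => [<-|xS]; first by rewrite setD11.
exact: setD1_notin.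
Qed.

Lemma card_coavoid (X : finType) (x : X) (S : {set X}) :
  x \notin S -> #|coavoid x S| = (#|X| - 1 - #|S|)%N.
Proof.
by move=> xS; rewrite /coavoid cardsCs setCK cardsU1 xS subnDA.
Qed.

Lemma card_notin_lt (X : finType) (x : X) (S : {set X}) :
  x \notin S -> (#|S| < #|X|)%N.
Proof.
move=> xS; rewrite -cardsT; apply: proper_card; apply/properP.
by split; [exact: subsetT | exists x; rewrite ?inE].
Qed.

Lemma contrib_nu_bneg_coavoid (R : numDomainType) (X : finType)
    (g : {ffun X -> bool} -> bool) (x : X) (S : {set X}) :
  x \notin S ->
  contrib x (nu R (bneg g)) (coavoid x S) = contrib x (omega R g) S.
Proof.
move=> xS; have S_x : S :\ x = S by exact: setD1_notin.
have top : x |: coavoid x S = ~: S.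
  by apply/setP => y; rewrite !inE; case: eqVneq => [->|].
have bot : coavoid x S :\ x = ~: (x |: S).
  exact/setD1_notin/coavoid_notin.
rewrite /contrib top bot !nu_bneg_setC S_x.
by rewrite opprB addrC addrA subrK.
Qed.

Theorem mainTheorem14 (R : realFieldType) (X : finType) (c : nat -> R) :
  @expectation_weights R X c ->
  (forall k, (k < #|X|)%N -> c k = c (#|X| - 1 - k)%N) ->
  forall (g : {ffun X -> bool} -> bool) (x : X),
    @expect R X c x (@omega R X g) = @expect R X c x (@nu R X (@bneg X g)).
Proof.
move=> _ c_sym g x; rewrite /expect [RHS](sum_coavoid x) /=.
apply: eq_bigr => S xS.
rewrite contrib_nu_bneg_coavoid // card_coavoid //.
by rewrite -c_sym // (card_notin_lt xS).
Qed.
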